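(* If $H$ is an $\operatorname{IR}$-graph of diameter $2$, then $H$ has an induced $C_4$.
   Context: All graphs are finite and simple. For $G=(V,E)$, $D\subseteq V$, $v\in D$: $\operatorname{PN}(v,D)=N[v]-N[D-\{v\}]$ (closed neighbourhoods). $D$ is irredundant if $\operatorname{PN}(v,D)\neq\varnothing$ for all $v\in D$; $\operatorname{IR}(G)$ is the maximum size of an irredundant set; an $\operatorname{IR}(G)$-set is an irredundant set of that size. $G(\operatorname{IR})$ has the $\operatorname{IR}(G)$-sets as vertices, with $D\sim D'$ iff there exist $u\in D$, $v\in D'$ with $uv\in E(G)$ and $D'=(D-\{u\})\cup\{v\}$. A graph $H$ is an $\operatorname{IR}$-graph if $H\cong G(\operatorname{IR})$ for some graph $G$. *)

From mathcomp Require Import all_boot.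
Set Implicit Arguments. Unset Strict Implicit. Unset Printing Implicit Defensive.

Definition simple_graph (T : finType) (e : rel T) : Prop :=
  symmetric e /\ irreflexive e.

Section IR.
Variables (T : finType) (e : rel T).

Definition cnbhd (v : T) : {set T} := v |: [set u | e v u].
Definition cnbhdS (S : {set T}) : {set T} := \bigcup_(u in S) cnbhd u.
Definition pn (v : T) (D : {set T}) : {set T} := cnbhd v :\: cnbhdS (D :\ v).

Definition irredundant (D : {set T}) : bool :=
  [forall v in D, pn v D != set0].

Definition IR : nat := \max_(D : {set T} | irredundant D) #|D|.

Definition IRset (D : {set T}) : bool := irredundant D && (#|D| == IR).

Definition IRadj (D D' : {set T}) : Prop :=
  exists u v, [/\ u \in D, v \in D', e u v & D' = (D :\ u) :|: [set v]].
End IR.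

Definition iso_to_GIR (V : finType) (h : rel V) (T : finType) (e : rel T) : Prop :=
  exists f : V -> {set T},
    [/\ injective f,
        (forall x, IRset e (f x)),
        (forall D, IRset e D -> exists x, f x = D) &
        (forall x y, h x y <-> IRadj e (f x) (f y))].

(* H is an IR-graph: H is isomorphic to G(IR) for some finite simple graph G
   (w.l.o.g. on vertex set 'I_n). *)
Definition IR_graph (V : finType) (h : rel V) : Prop :=
  exists (n : nat) (e : rel 'I_n), simple_graph e /\ iso_to_GIR h e.

Definition diameter2 (V : finType) (h : rel V) : Prop :=
  (forall x y, x = y \/ h x y \/ exists z, h x z && h z y) /\
  (exists x y, x != y /\ ~~ h x y).

Definition has_induced_C4 (V : finType) (h : rel V) : Prop :=
  exists a b c d : V,
    [/\ uniq [:: a; b; c; d],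
        [&& h a b, h b c, h c d & h d a] &
        ~~ h a c && ~~ h b d].

(* Call x an owner of an IR-set D when x has a private neighbour other than
   itself.  Replacing every owner of D by such a neighbour gives an IR-set
   differing from D exactly at its owners, while each edge of G(IR) exchanges a
   single vertex; so diameter 2 allows at most two owners.  If some IR-set D has
   two owners x, y, with chosen private neighbours x', y', then D, D - x + x',
   D - x - y + x' + y', D - y + y' is an induced 4-cycle.  Otherwise every IR-set
   is independent, and two IR-sets with a common neighbour Z both arise from Z by
   exchanging its unique owner u for private neighbours v1, v2 of u; these are
   adjacent, since Z - u + v1 + v2 would be a larger irredundant set, so the two
   IR-sets are adjacent too: G(IR) would be complete, not of diameter 2. *)

From mathcomp Require Import all_boot.
Set Implicit Arguments. Unset Strict Implicit. Unset Printing Implicit Defensive.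

Section Exchange.
Variable T : finType.
Implicit Types (A B C : {set T}) (u v w : T).

Definition exch A u v : {set T} := A :\ u :|: [set v].

Lemma card_exch A u v : u \in A -> v \notin A -> #|exch A u v| = #|A|.
Proof.
move=> uA vA; rewrite /exch setUC cardsU1 in_setD1 (negbTE vA) andbF.
by rewrite [in RHS](cardsD1 u) uA.
Qed.

Lemma exchK A u v : u \in A -> v \notin A -> exch (exch A u v) v u = A.
Proof.
move=> uA vA; apply/setP => w; rewrite !inE.
case: (eqVneq w u) => [->|_]; first by rewrite orbT.
by case: (eqVneq w v) => [->|_]; rewrite /= ?orbF ?(negbTE vA).
Qed.

Lemma exchC A u v u' v' : u != v' -> u' != v ->
  exch (exch A u v) u' v' = exch (exch A u' v') u v.
Proof.
move=> uv' u'v; apply/setP => w; rewrite !inE.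
case: (eqVneq w v') => [->|_]; first by rewrite !orbT andbT (eq_sym v') uv'.
case: (eqVneq w v) => [->|_]; first by rewrite !orbT andbT (eq_sym v) u'v.
by rewrite !orbF andbCA.
Qed.

Lemma exch_trans A u v w : v \notin A -> exch (exch A u v) v w = exch A u w.
Proof.
move=> vA; apply/setP => x; rewrite !inE.
by case: (eqVneq x v) => [->|]; rewrite ?(negbTE vA) ?andbF ?orbF.
Qed.

Lemma card_setD_trans A B C : #|A :\: C| <= #|A :\: B| + #|B :\: C|.
Proof.
apply: leq_trans (leq_card_setU _ _); apply: subset_leq_card.
by apply/subsetP => x; rewrite !inE; case: (x \in A); case: (x \in B); case: (x \in C).
Qed.

Lemma card_setD_gt1 A B u v : u != v -> u \in A -> v \in A -> u \notin B -> v \notin B ->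
  1 < #|A :\: B|.
Proof. by move=> uv uA vA uB vB; apply/card_gt1P; exists u, v; rewrite !inE uA vA uB vB. Qed.

End Exchange.

Lemma IRadj_card_setD (T : finType) (e : rel T) A B : IRadj e A B -> #|A :\: B| <= 1.
Proof.
case=> u [v [uA _ _ ->]]; rewrite -(cards1 u); apply: subset_leq_card.
by apply/subsetP => w; rewrite !inE; case: eqP => // _; rewrite /= andbC; case: (w \in A).
Qed.

Section PrivateNeighbours.
Variables (T : finType) (e : rel T).
Hypotheses (e_sym : symmetric e) (e_irr : irreflexive e).
Implicit Types (D P Q : {set T}) (u v x y z p : T).

Definition independent Q := {in Q &, forall y z, ~~ e y z}.

Definition epn D x : {set T} := pn e x D :\ x.

Definition epn_owners D : {set T} := [set x in D | epn D x != set0].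

(* When x has no external private neighbour, the default x is private to x. *)
Definition pn_choice D x : T := odflt x [pick p in epn D x].

Definition pn_swap D : {set T} := pn_choice D @: D.

Lemma in_cnbhd x y : (y \in cnbhd e x) = (y == x) || e x y.
Proof. by rewrite !inE. Qed.

Lemma cnbhd_sym x y : (x \in cnbhd e y) = (y \in cnbhd e x).
Proof. by rewrite !in_cnbhd eq_sym e_sym. Qed.

Lemma pn_cnbhd D x p : p \in pn e x D -> p \in cnbhd e x.
Proof. by case/setDP. Qed.

Lemma pn_notin_cnbhd D x p z : p \in pn e x D -> z \in D -> z != x -> p \notin cnbhd e z.
Proof.
case/setDP=> _ pN zD zx; apply: contra pN => pz.
by apply/bigcupP; exists z; rewrite // !inE zx.
Qed.

Lemma pn_of_cnbhd D x p :
  p \in cnbhd e x -> {in D, forall z, z != x -> p \notin cnbhd e z} -> p \in pn e x D.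
Proof.
move=> px pD; rewrite inE px andbT; apply/bigcupP => -[z].
by case/setD1P=> zx zD; apply/negP/pD.
Qed.

Lemma epn_adj D x p : p \in epn D x -> e x p.
Proof. by case/setD1P=> px /pn_cnbhd; rewrite in_cnbhd (negbTE px). Qed.

Lemma epn_nadj D x p z : p \in epn D x -> z \in D -> z != x -> ~~ e z p.
Proof.
by case/setD1P=> _ pP zD zx; have := pn_notin_cnbhd pP zD zx; rewrite in_cnbhd negb_or => /andP[].
Qed.

Lemma epn_notin D x p : p \in epn D x -> p \notin D.
Proof.
case/setD1P=> px pP; apply/negP => pD.
by have := pn_notin_cnbhd pP pD px; rewrite in_cnbhd eqxx.
Qed.

Lemma mem_epn_owners D x p : x \in D -> p \in epn D x -> x \in epn_owners D.
Proof. by move=> xD pE; rewrite inE xD; apply/set0Pn; exists p. Qed.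

Lemma independent_irredundant Q : independent Q -> irredundant e Q.
Proof.
move=> indQ; apply/forallP => y; apply/implyP => yQ; apply/set0Pn; exists y.
apply: pn_of_cnbhd => [|z zQ zy]; first by rewrite in_cnbhd eqxx.
by rewrite in_cnbhd negb_or eq_sym zy indQ.
Qed.

Lemma irredundant_card_le Q : irredundant e Q -> #|Q| <= IR e.
Proof. exact: (@leq_bigmax_cond _ (irredundant e) (fun D => #|D|)). Qed.

Lemma independentU_epn D u P :
  independent (D :\ u) -> P \subset epn D u -> independent P -> independent (D :\ u :|: P).
Proof.
move=> indD sPE indP a b; rewrite !in_setU => /orP[aD|aP] /orP[bD|bP].
- exact: indD.
- by case/setD1P: aD => au aD; apply: epn_nadj (subsetP sPE _ bP) aD au.
- by case/setD1P: bD => bu bD; rewrite e_sym; apply: epn_nadj (subsetP sPE _ aP) bD bu.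
- exact: indP.
Qed.

Lemma pn_choice_epn D x : x \in epn_owners D -> pn_choice D x \in epn D x.
Proof.
case/setIdP=> _ /set0Pn[p pE]; rewrite /pn_choice.
by case: pickP => [//|epn0]; rewrite epn0 in pE.
Qed.

Lemma pn_choice_id D x : x \in D -> x \notin epn_owners D -> pn_choice D x = x.
Proof.
move=> xD; rewrite inE xD negbK => /eqP epn0; rewrite /pn_choice.
by case: pickP => [p|//]; rewrite epn0 inE.
Qed.

Lemma pn_swapE D : pn_swap D = (D :\: epn_owners D) :|: pn_choice D @: epn_owners D.
Proof.
have OD : epn_owners D \subset D by apply/subsetP => x /setIdP[].
rewrite /pn_swap -{2}(setID D (epn_owners D)) (setIidPr OD) imsetU setUC.
congr (_ :|: _); rewrite -[RHS]imset_id; apply: eq_in_imset => x /setDP[xD xO].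
exact: pn_choice_id.
Qed.

Section Irredundant.
Variable D : {set T}.
Hypothesis irrD : irredundant e D.

Lemma pn_neq0 x : x \in D -> pn e x D != set0.
Proof. by move=> xD; move/forallP: irrD => /(_ x); rewrite xD. Qed.

Lemma pn_self x : x \in D -> x \notin epn_owners D -> x \in pn e x D.
Proof.
move=> xD; rewrite inE xD negbK => /eqP epn0.
have /set0Pn[p pP] := pn_neq0 xD; case: (eqVneq p x) pP => [-> //|px pP].
by have := in_set0 p; rewrite -epn0 in_setD1 px pP.
Qed.

Lemma epn_owners_of_adj x z : x \in D -> z \in D -> e z x -> x \in epn_owners D.
Proof.
move=> xD zD ezx; apply: contraT => xO.
have zx : z != x by apply: contraTneq ezx => ->; rewrite e_irr.
by have := pn_notin_cnbhd (pn_self xD xO) zD zx; rewrite in_cnbhd ezx orbT.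
Qed.

Lemma independent_setD_owners A : #|epn_owners D :\: A| <= 1 -> independent (D :\: A).
Proof.
move=> le1 a b /setDP[aD aA] /setDP[bD bA]; apply/negP => eab.
have ab : a != b by apply: contraTneq eab => ->; rewrite e_irr.
have aO : a \in epn_owners D by apply: epn_owners_of_adj aD bD _; rewrite e_sym.
have bO : b \in epn_owners D := epn_owners_of_adj bD aD eab.
move: le1; rewrite leqNgt => /negP; apply; apply/card_gt1P.
by exists a, b; rewrite !in_setD aO bO aA bA.
Qed.

Lemma pn_choice_pn x : x \in D -> pn_choice D x \in pn e x D.
Proof.
move=> xD; rewrite /pn_choice; case: pickP => [p|epn0] /=; first by case/setD1P.
apply: pn_self => //; rewrite inE xD negbK; apply/eqP/setP => p.
by rewrite epn0 inE.
Qed.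

Lemma cnbhd_pn_choice x y : x \in D -> y \in D -> (x \in cnbhd e (pn_choice D y)) = (x == y).
Proof.
move=> xD yD; have pP := pn_choice_pn yD; rewrite cnbhd_sym.
case: (eqVneq x y) => [->|xy]; first exact: pn_cnbhd pP.
exact/negbTE/(pn_notin_cnbhd pP xD xy).
Qed.

Lemma pn_choice_inj : {in D &, injective (pn_choice D)}.
Proof.
by move=> x y xD yD pxy; apply/eqP; rewrite -(cnbhd_pn_choice xD yD) -pxy cnbhd_pn_choice.
Qed.

Lemma irredundant_swap : irredundant e (pn_swap D).
Proof.
apply/forallP => w; apply/implyP => /imsetP[y yD ->]; apply/set0Pn; exists y.
apply: pn_of_cnbhd => [|w' /imsetP[z zD ->] pzy]; first by rewrite cnbhd_pn_choice.
by rewrite cnbhd_pn_choice // eq_sym; apply: contraNneq pzy => ->.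
Qed.

Lemma card_swap : #|pn_swap D| = #|D|.
Proof. exact: card_in_imset pn_choice_inj. Qed.

Lemma epn_owners_sub_swap : epn_owners D \subset D :\: pn_swap D.
Proof.
apply/subsetP => x xO; have xD : x \in D by case/setIdP: xO.
rewrite in_setD xD andbT; apply/imsetP => -[y yD xE].
have /eqP xy : x == y by rewrite -(cnbhd_pn_choice xD yD) -xE in_cnbhd eqxx.
by have := pn_choice_epn xO; rewrite xy -xE in_setD1 xy eqxx.
Qed.

End Irredundant.

Lemma IRset_swap D : IRset e D -> IRset e (pn_swap D).
Proof. by case/andP=> irrD cardD; rewrite /IRset irredundant_swap // card_swap. Qed.

Lemma IRset_exch_owner D x : IRset e D -> x \in epn_owners D ->
  #|epn_owners D :\ x| <= 1 -> IRset e (exch D x (pn_choice D x)).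
Proof.
case/andP=> irrD cardD xO le1; have pE := pn_choice_epn xO.
have xD : x \in D by case/setIdP: xO.
rewrite /IRset card_exch ?cardD ?andbT ?(epn_notin pE) //.
apply/independent_irredundant/independentU_epn; first exact: independent_setD_owners.
  by rewrite sub1set.
by move=> a b /set1P-> /set1P->; rewrite e_irr.
Qed.

Lemma epn_clique Z u v1 v2 : IRset e Z -> u \in Z -> #|epn_owners Z :\ u| <= 1 ->
  v1 \in epn Z u -> v2 \in epn Z u -> v1 != v2 -> e v1 v2.
Proof.
case/andP=> irrZ /eqP cardZ uZ le1 v1E v2E v12; apply: contraT => ne12.
have indQ : independent (Z :\ u :|: [set v1; v2]).
  apply: independentU_epn; first exact: independent_setD_owners.
    by apply/subsetP => w /set2P[]->.
  by move=> a b /set2P[]-> /set2P[]->; rewrite ?e_irr // e_sym.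
have := irredundant_card_le (independent_irredundant indQ).
rewrite setUC -setUA !cardsU1 !inE negb_or v12 (negbTE (epn_notin v1E)).
rewrite (negbTE (epn_notin v2E)) !andbF -cardZ (cardsD1 u Z) uZ.
by rewrite add1n ltnn.
Qed.

Section OwnerPair.
Variables (D : {set T}) (x y : T).
Hypotheses (IRD : IRset e D) (Oxy : epn_owners D = [set x; y]) (xy : x != y).

Local Notation px := (pn_choice D x).
Local Notation py := (pn_choice D y).

Let xO : x \in epn_owners D. Proof. by rewrite Oxy !inE eqxx. Qed.
Let yO : y \in epn_owners D. Proof. by rewrite Oxy !inE eqxx orbT. Qed.
Let xD : x \in D. Proof. by case/setIdP: xO. Qed.
Let yD : y \in D. Proof. by case/setIdP: yO. Qed.
Let pxE : px \in epn D x. Proof. exact: pn_choice_epn xO. Qed.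
Let pyE : py \in epn D y. Proof. exact: pn_choice_epn yO. Qed.
Let pxD : px \notin D. Proof. exact: epn_notin pxE. Qed.
Let pyD : py \notin D. Proof. exact: epn_notin pyE. Qed.
Let pxx : (x == px) = false. Proof. by rewrite eq_sym; case/setD1P: pxE => /negbTE. Qed.
Let pyy : (y == py) = false. Proof. by rewrite eq_sym; case/setD1P: pyE => /negbTE. Qed.
Let xpy : x != py. Proof. exact: memPn pyD x xD. Qed.
Let ypx : y != px. Proof. exact: memPn pxD y yD. Qed.
Let pxpy : (px == py) = false.
Proof.
case/andP: IRD => irrD _; apply/negbTE; apply: contra xy => /eqP.
by move/(pn_choice_inj irrD xD yD)/eqP.
Qed.

Lemma owner_pair_swap : pn_swap D = exch (exch D x px) y py.
Proof.
rewrite pn_swapE Oxy imsetU1 imset_set1; apply/setP => w; rewrite !inE.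
case: (boolP (w \in D)) => wD.
  have wpx : (w == px) = false by apply: contraNF pxD => /eqP <-.
  have wpy : (w == py) = false by apply: contraNF pyD => /eqP <-.
  by rewrite wpx wpy /= !orbF !andbT negb_or andbC.
have wy : (w == y) = false by apply: contraNF wD => /eqP ->.
by rewrite wy !andbF.
Qed.

Lemma owner_pair_IRsets :
  [/\ IRset e (exch D x px), IRset e (exch (exch D x px) y py) & IRset e (exch D y py)].
Proof.
split.
- by apply: IRset_exch_owner => //; rewrite Oxy setU1K ?cards1 // in_set1.
- by rewrite -owner_pair_swap; apply: IRset_swap.
- by apply: IRset_exch_owner => //; rewrite Oxy setUC setU1K ?cards1 // in_set1 eq_sym.
Qed.

Lemma owner_pair_cycle :
  [/\ IRadj e D (exch D x px), IRadj e (exch D x px) (exch (exch D x px) y py),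
      IRadj e (exch (exch D x px) y py) (exch D y py) & IRadj e (exch D y py) D].
Proof.
have PW2 := exchC D xpy ypx; split.
- by exists x, px; split; rewrite ?(epn_adj pxE) // !inE eqxx orbT.
- exists y, py; split; rewrite ?(epn_adj pyE) // !inE ?eqxx ?orbT //.
  by rewrite eq_sym xy yD.
- exists px, x; split; rewrite ?PW2 ?inE ?eqxx ?orbT ?xy ?xD //.
    by rewrite e_sym (epn_adj pxE).
  by apply/esym/exchK; rewrite !inE ?xy ?xD // pxpy (negbTE pxD) andbF.
- exists py, y; split => //; first by rewrite !inE eqxx orbT.
    by rewrite e_sym (epn_adj pyE).
  exact/esym/exchK.
Qed.

Lemma owner_pair_far :
  1 < #|D :\: exch (exch D x px) y py| /\ 1 < #|exch D x px :\: exch D y py|.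
Proof.
split.
  apply: card_setD_gt1 xy xD yD _ _; rewrite !inE eqxx /= ?pyy //.
  by rewrite (negbTE xpy) pxx andbF.
apply: (@card_setD_gt1 _ _ _ px y); rewrite ?inE ?eqxx ?orbT ?pyy //=.
- by rewrite eq_sym.
- by rewrite eq_sym xy yD.
- by rewrite (negbTE pxD) pxpy andbF.
Qed.

End OwnerPair.

Lemma epn_of_IRadj D D' u v : IRset e D -> IRset e D' -> #|epn_owners D'| <= 1 ->
  D' = exch D u v -> u \in D -> e u v -> v \in epn D u.
Proof.
move=> /andP[_ /eqP cardD] /andP[irrD' /eqP cardD'] le1 D'E uD euv.
have vu : v != u by apply: contraTneq euv => ->; rewrite e_irr.
have indD' : independent D' by rewrite -(setD0 D'); apply: independent_setD_owners; rewrite ?setD0.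
have vD : v \notin D.
  apply/negP => vD; move: cardD'; rewrite D'E /exch (setUidPl _) ?sub1set ?in_setD1 ?vu ?vD //.
  by rewrite -cardD (cardsD1 u D) uD; exact: n_Sn.
rewrite in_setD1 vu; apply: pn_of_cnbhd => [|z zD zu]; first by rewrite in_cnbhd euv orbT.
rewrite in_cnbhd negb_or eq_sym (memPn vD z zD) /=.
by apply: indD'; rewrite D'E !inE ?zu ?zD ?eqxx ?orbT.
Qed.

End PrivateNeighbours.

Section IRGraphs.
Variables (T : finType) (e : rel T) (V : finType) (h : rel V) (f : V -> {set T}).
Hypotheses (e_sym : symmetric e) (e_irr : irreflexive e).
Hypotheses (h_sym : symmetric h) (h_irr : irreflexive h).
Hypotheses (f_inj : injective f) (f_IR : forall a, IRset e (f a)).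
Hypothesis f_onto : forall D, IRset e D -> exists a, f a = D.
Hypothesis f_adj : forall a b, h a b <-> IRadj e (f a) (f b).
Hypothesis h_dist2 : forall a b, a = b \/ h a b \/ exists c, h a c && h c b.

Lemma card_setD_le2 a b : #|f a :\: f b| <= 2.
Proof.
case: (h_dist2 a b) => [->|[/f_adj/IRadj_card_setD/leq_trans-> //|]].
  by rewrite setDv cards0.
case=> c /andP[/f_adj/IRadj_card_setD ac /f_adj/IRadj_card_setD cb].
exact: leq_trans (card_setD_trans _ (f c) _) (leq_add ac cb).
Qed.

Lemma card_epn_owners_le2 a : #|epn_owners e (f a)| <= 2.
Proof.
have /andP[irrD _] := f_IR a; have [b fb] := f_onto (IRset_swap e_sym (f_IR a)).
apply: leq_trans (subset_leq_card (epn_owners_sub_swap e_sym irrD)) _.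
by rewrite -fb card_setD_le2.
Qed.

Lemma induced_C4_of_IRsets D1 D2 D3 D4 :
  IRset e D1 -> IRset e D2 -> IRset e D3 -> IRset e D4 ->
  IRadj e D1 D2 -> IRadj e D2 D3 -> IRadj e D3 D4 -> IRadj e D4 D1 ->
  1 < #|D1 :\: D3| -> 1 < #|D2 :\: D4| -> has_induced_C4 h.
Proof.
move=> /f_onto[a <-] /f_onto[b <-] /f_onto[c <-] /f_onto[d <-].
move=> /f_adj hab /f_adj hbc /f_adj hcd /f_adj hda ac2 bd2.
have nadj x y : 1 < #|f x :\: f y| -> ~~ h x y.
  by move=> lt; apply/negP => /f_adj/IRadj_card_setD; rewrite leqNgt lt.
have neq x y : 1 < #|f x :\: f y| -> x != y.
  by move=> lt; apply: contraTneq lt => ->; rewrite setDv cards0.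
have hneq x y : h x y -> x != y by move=> hxy; apply: contraTneq hxy => ->; rewrite h_irr.
exists a, b, c, d; split; last by rewrite !nadj.
  rewrite /= !inE !negb_or (hneq _ _ hab) (neq _ _ ac2) (eq_sym a) (hneq _ _ hda).
  by rewrite (hneq _ _ hbc) (neq _ _ bd2) (hneq _ _ hcd).
by rewrite hab hbc hcd hda.
Qed.

Lemma induced_C4_of_owner_pair D x y :
  IRset e D -> epn_owners e D = [set x; y] -> x != y -> has_induced_C4 h.
Proof.
move=> IRD Oxy xy.
have [IRW1 IRP IRW2] := owner_pair_IRsets e_sym e_irr IRD Oxy xy.
have [DW1 W1P PW2 W2D] := owner_pair_cycle e_sym IRD Oxy xy.
have [farDP farW12] := owner_pair_far e_sym IRD Oxy xy.
exact: induced_C4_of_IRsets IRD IRW1 IRP IRW2 DW1 W1P PW2 W2D farDP farW12.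
Qed.

Lemma complete_of_owners_le1 a b :
  (forall c, #|epn_owners e (f c)| <= 1) -> a != b -> h a b.
Proof.
move=> le1 ab; case: (h_dist2 a b) => [abE|[//|[z /andP[hza hzb]]]].
  by rewrite abE eqxx in ab.
rewrite h_sym in hza.
case/f_adj: hza => u [v1 [uZ _ euv1 fa]]; case/f_adj: hzb => u' [v2 [u'Z _ eu'v2 fb]].
have v1E := epn_of_IRadj e_sym e_irr (f_IR z) (f_IR a) (le1 a) fa uZ euv1.
have v2E := epn_of_IRadj e_sym e_irr (f_IR z) (f_IR b) (le1 b) fb u'Z eu'v2.
have uu' : u = u' := card_le1_eqP (le1 z) _ _ (mem_epn_owners u'Z v2E) (mem_epn_owners uZ v1E).
subst u'; have v12 : v1 != v2.
  by apply: contraNneq ab => v12; apply/eqP/f_inj; rewrite fa fb v12.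
have le1u : #|epn_owners e (f z) :\ u| <= 1.
  exact: leq_trans (subset_leq_card (subD1set _ _)) (le1 z).
have ev12 : e v1 v2 := epn_clique e_sym e_irr (f_IR z) uZ le1u v1E v2E v12.
apply/f_adj; exists v1, v2; rewrite fa fb; split; rewrite ?inE ?eqxx ?orbT //.
exact/esym/exch_trans/(epn_notin v1E).
Qed.

End IRGraphs.

Theorem proposition4p6 (V : finType) (h : rel V) :
  simple_graph h -> IR_graph h -> diameter2 h -> has_induced_C4 h.
Proof.
move=> [h_sym h_irr] [n [e [[e_sym e_irr] [f [f_inj f_IR f_onto f_adj]]]]].
move=> [h_dist2 [a [b [ab nhab]]]].
case: (boolP [exists c, 1 < #|epn_owners e (f c)|]) => [/existsP[c c_gt1]|/existsPn le1].
  have /cards2P[x [y [xy Oxy]]] : #|epn_owners e (f c)| == 2.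
    by rewrite eqn_leq c_gt1 (card_epn_owners_le2 e_sym f_IR f_onto f_adj h_dist2).
  exact (induced_C4_of_owner_pair e_sym e_irr h_irr f_onto f_adj (f_IR c) Oxy xy).
have le1' d : #|epn_owners e (f d)| <= 1 by rewrite leqNgt le1.
by rewrite (complete_of_owners_le1 e_sym e_irr h_sym f_inj f_IR f_adj h_dist2 le1' ab) in nhab.
Qed.
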